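(* Let $(V,\mathrm{dist})$ be a metric space and $p_1,\dots,p_n\in V$ (not necessarily distinct). For $t\in[n]$ let $Q_t:=\sum_{i=1}^t\sum_{j=1}^t\mathrm{dist}(p_i,p_j)$, and assume $Q_n>0$. For any $t\in[n]$, if $Q_t=0$ then $$\frac1t\ \ge\ \frac{\sum_{i=1}^n\mathrm{dist}(p_t,p_i)}{Q_n}.$$ *)

From mathcomp Require Import all_boot all_order all_algebra.
Set Implicit Arguments. Unset Strict Implicit. Unset Printing Implicit Defensive.
Import Order.TTheory GRing.Theory Num.Theory.
Local Open Scope ring_scope.

Definition is_metric (R : realFieldType) (V : Type) (dist : V -> V -> R) : Prop :=
  [/\ forall x y, 0 <= dist x y,
      forall x y, dist x y = 0 <-> x = y,
      forall x y, dist x y = dist y x &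
      forall x y z, dist x z <= dist x y + dist y z].

Definition Qsum (R : realFieldType) (V : Type) (dist : V -> V -> R)
  (p : nat -> V) (t : nat) : R :=
  \sum_(1 <= i < t.+1) \sum_(1 <= j < t.+1) dist (p i) (p j).

From mathcomp Require Import all_boot all_order all_algebra.
Import Order.TTheory GRing.Theory Num.Theory.
Local Open Scope ring_scope.

(* Since distances are nonnegative, Q_t = 0 forces every distance among
   p_1, ..., p_t to vanish, so these points all equal p_t.  The first t rows
   of the double sum Q_n are then all equal to the row of p_t, whence
   t * sum_i dist(p_t, p_i) <= Q_n. *)

Section ZeroPrefix.

Context {R : realFieldType} {V : Type} {dist : V -> V -> R} {p : nat -> V}.
Hypothesis dist_ge0 : forall x y, 0 <= dist x y.

Lemma Qsum_eq0_const (t : nat) :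
  (forall x y, dist x y = 0 -> x = y) ->
  Qsum dist p t = 0 -> forall i, (1 <= i <= t)%N -> p i = p t.
Proof.
move=> dist_eq0 /eqP; rewrite psumr_eq0 => [/allP rows0 i /andP[i_gt0 it]|i _].
- have t_row : t \in index_iota 1 t.+1.
    by rewrite mem_index_iota ltnSn (leq_trans i_gt0 it).
  have /= := rows0 i; rewrite mem_index_iota i_gt0 ltnS it => /(_ isT).
  by rewrite psumr_eq0 // => /allP /(_ t t_row) /eqP /dist_eq0.
- exact: sumr_ge0.
Qed.

Lemma Qsum_ge_row (t n : nat) :
  (t <= n)%N -> (forall i, (1 <= i <= t)%N -> p i = p t) ->
  t%:R * \sum_(1 <= j < n.+1) dist (p t) (p j) <= Qsum dist p n.
Proof.
move=> tn const_p; rewrite /Qsum [X in _ <= X](big_cat_nat _ (n := t.+1)) //=.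
have -> : \sum_(1 <= i < t.+1) \sum_(1 <= j < n.+1) dist (p i) (p j)
          = t%:R * \sum_(1 <= j < n.+1) dist (p t) (p j).
  rewrite (eq_big_nat _ _ (F2 := fun=> \sum_(1 <= j < n.+1) dist (p t) (p j))).
    by rewrite sumr_const_nat subSS subn0 mulr_natl.
  by move=> i /const_p ->.
by rewrite lerDl; apply: sumr_ge0 => i _; apply: sumr_ge0.
Qed.

End ZeroPrefix.

Theorem lemma3p6 (R : realFieldType) (V : Type) (dist : V -> V -> R)
  (p : nat -> V) (n t : nat) :
  is_metric dist ->
  0 < Qsum dist p n ->
  (1 <= t <= n)%N ->
  Qsum dist p t = 0 ->
  (\sum_(1 <= i < n.+1) dist (p t) (p i)) / Qsum dist p n <= t%:R^-1.
Proof.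
case=> dist_ge0 dist_eq0 _ _ Qn_gt0 /andP[t_gt0 tn] Qt0.
have const_p := Qsum_eq0_const dist_ge0 _ (fun x y => (dist_eq0 x y).1) Qt0.
have row_le := Qsum_ge_row dist_ge0 _ _ tn const_p.
by rewrite ler_pdivrMr // ler_pdivlMl // ltr0n.
Qed.
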